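(* Let $\overline{\mathcal G_H}=\mathbb S^1_\beta\times[-\infty,\infty]_a$ with the smooth structure described in the context, let $\mu_H(\beta,a)=(1+a^2)^{-1/2}$ (extended by $0$ at $a=\pm\infty$), and let $\mathcal S_A^H(\beta,a)=(\beta+\pi+2\tan^{-1}a,\,-a)$. A function $h$ on $\overline{\mathcal G_H}$ belongs to $C^\infty_{\alpha,+}(\overline{\mathcal G_H})$ if and only if $h\in C^\infty(\overline{\mathcal G_H})$, $h=h\circ\mathcal S_A^H$, and, when $h$ is expressed in terms of the coordinates $(\beta+\tan^{-1}a,\ \mu_H)$ near $\partial\overline{\mathcal G_H}=\{a=\pm\infty\}$, all odd-order terms of the Taylor expansion of $h$ off of $\partial\overline{\mathcal G_H}$ (in the variable $\mu_H$) vanish.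
   Context: $\overline{\mathcal G_H}=\mathbb S^1_\beta\times[-\infty,\infty]_a$ is given the smooth structure of a compact manifold with boundary for which the map $\Psi_{hf}(\beta,a)=(\beta,\tan^{-1}a)$ (with $\tan^{-1}(\pm\infty)=\pm\pi/2$) is a diffeomorphism onto $\partial_+S\mathbb D_E:=\mathbb S^1_\beta\times[-\pi/2,\pi/2]_\alpha$; then $\mu_H$ is a smooth boundary defining function. Fan-beam coordinates on the boundary $\partial S\mathbb D_E$ of the unit tangent bundle of the Euclidean unit disk: $(\beta,\alpha)\in\mathbb S^1\times(\mathbb R/2\pi\mathbb Z)$ denotes the unit vector at $e^{i\beta}$ with direction $e^{i(\beta+\pi+\alpha)}$; $\partial_+S\mathbb D_E$ corresponds to $\alpha\in[-\pi/2,\pi/2]$ (inward pointing), $\partial_-S\mathbb D_E$ to $\alpha\in[\pi/2,3\pi/2]$. The scattering relation is $\mathcal S^E(\beta,\alpha)=(\beta+\pi+2\alpha,\pi-\alpha)$, and $\mathcal S^E_A(\beta,\alpha)=(\beta+\pi+2\alpha,-\alpha)$. For $u$ on $\partial_+S\mathbb D_E$, $A_+u$ is the function on $\partial S\mathbb D_E$ equal to $u$ on $\partial_+S\mathbb D_E$ and to $u\circ\mathcal S^E$ on $\partial_-S\mathbb D_E$. Define $C^\infty_\alpha(\partial_+S\mathbb D_E)=\{u\in C^\infty(\partial_+S\mathbb D_E): A_+u\in C^\infty(\partial S\mathbb D_E)\}$, $C^\infty_{\alpha,+}(\partial_+S\mathbb D_E)=\{u\in C^\infty_\alpha(\partial_+S\mathbb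 D_E): u\circ\mathcal S^E_A=u\}$, and $C^\infty_{\alpha,+}(\overline{\mathcal G_H}):=\Psi_{hf}^*C^\infty_{\alpha,+}(\partial_+S\mathbb D_E)=\{u\circ\Psi_{hf}\}$. *)

From Stdlib Require Import Reals Lra.
From Coquelicot Require Import Coquelicot.
Open Scope R_scope.

(** Iterated partial derivatives of f : R -> R -> R along a list of
    directions (true = first variable, false = second variable);
    the head of the list is the last derivative taken. *)
Fixpoint pder (l : list bool) (f : R -> R -> R) : R -> R -> R :=
  match l with
  | nil => f
  | cons b l' =>
      let g := pder l' f in
      if b then (fun x y => Derive (fun t => g t y) x)
           else (fun x y => Derive (fun t => g x t) y)
  end.

Definition smooth2 (f : R -> R -> R) : Prop :=
  forall (l : list bool) (x y : R),
    ex_derive (fun t => pder l f t y) x /\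
    ex_derive (fun t => pder l f x t) y /\
    continuity_2d_pt (pder l f) x y.

(** Functions on S^1_beta x ... are represented by their lifts, 2pi-periodic
    in the first variable. *)
Definition periodic_b {A : Type} (u : R -> A -> R) : Prop :=
  forall b a, u (b + 2 * PI) a = u b a.

(** F agrees with u on the closed strip R x [-pi/2, pi/2]
    (the lift of d_+ S D_E). *)
Definition strip_ext (F u : R -> R -> R) : Prop :=
  forall b a, - (PI / 2) <= a <= PI / 2 -> F b a = u b a.

(** C^infinity(d_+ S D_E) = S^1 x [-pi/2,pi/2] (manifold with boundary):
    restriction of a smooth function on a neighbourhood (here: R^2). *)
Definition C_strip (u : R -> R -> R) : Prop :=
  exists F, smooth2 F /\ strip_ext F u.

(** Reduction of alpha modulo 2pi into [-pi/2, 3pi/2). *)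
Definition red_alpha (a : R) : R :=
  2 * PI * frac_part ((a + PI / 2) / (2 * PI)) - PI / 2.

Definition SE (b a : R) : R * R := (b + PI + 2 * a, PI - a).
Definition SEA (b a : R) : R * R := (b + PI + 2 * a, - a).

(** A_+ u on d S D_E = S^1 x (R / 2pi Z), lifted to R^2:
    u on alpha in [-pi/2,pi/2], u o S^E on alpha in [pi/2, 3pi/2]. *)
Definition Aplus (u : R -> R -> R) (b a : R) : R :=
  let a' := red_alpha a in
  if Rle_dec a' (PI / 2) then u b a'
  else u (fst (SE b a')) (snd (SE b a')).

(** C^infinity_alpha(d_+ S D_E): u smooth and A_+ u smooth on the torus
    (i.e. its doubly periodic lift is smooth on R^2). *)
Definition C_alpha (u : R -> R -> R) : Prop :=
  C_strip u /\ smooth2 (Aplus u).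

Definition C_alpha_plus (u : R -> R -> R) : Prop :=
  C_alpha u /\
  forall b a, - (PI / 2) <= a <= PI / 2 ->
    u (fst (SEA b a)) (snd (SEA b a)) = u b a.

Definition atanbar (a : Rbar) : R :=
  match a with
  | Finite x => atan x
  | p_infty => PI / 2
  | m_infty => - (PI / 2)
  end.

Definition tanbar (al : R) : Rbar :=
  if Rle_dec (PI / 2) al then p_infty
  else if Rle_dec al (- (PI / 2)) then m_infty
  else Finite (tan al).

Definition Psi_hf (b : R) (a : Rbar) : R * R := (b, atanbar a).

Definition muH (a : Rbar) : R :=
  match a with
  | Finite x => / sqrt (1 + x ^ 2)
  | _ => 0
  end.

Definition SHA (b : R) (a : Rbar) : R * Rbar :=
  (b + PI + 2 * atanbar a, Rbar_opp a).

Definition pullstrip (h : R -> Rbar -> R) : R -> R -> R :=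
  fun b al => h b (tanbar al).

Definition C_alpha_plus_GH (h : R -> Rbar -> R) : Prop :=
  exists u : R -> R -> R,
    periodic_b u /\ C_alpha_plus u /\
    forall b a, h b a = u (fst (Psi_hf b a)) (snd (Psi_hf b a)).

(** C^infinity(G_H) for the smooth structure making Psi_hf a diffeomorphism. *)
Definition C_GH (h : R -> Rbar -> R) : Prop := C_strip (pullstrip h).

(** Odd Taylor coefficients in mu_H vanish, in the boundary coordinates
    (theta, mu) = (beta + tan^{-1} a, mu_H) near a = +oo and a = -oo.
    Near a = +oo: alpha = tan^{-1} a = acos mu, beta = theta - acos mu.
    Near a = -oo: alpha = -acos mu, beta = theta + acos mu.
    Since h need only be smooth up to the boundary mu = 0, the Taylor
    coefficients at mu = 0 are computed through an arbitrary smooth extension F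
    of h o Psi_hf^{-1} (they do not depend on the choice of F). *)
Definition odd_taylor_vanish (h : R -> Rbar -> R) : Prop :=
  forall F : R -> R -> R, smooth2 F -> strip_ext F (pullstrip h) ->
  forall (k : nat) (th : R), Nat.Odd k ->
    Derive_n (fun m => F (th - acos m) (acos m)) k 0 = 0 /\
    Derive_n (fun m => F (th + acos m) (- acos m)) k 0 = 0.

(* Work in the coordinates [(theta, alpha) = (beta + alpha, alpha)] on the strip.  There
   [A_+ u] is, up to the period [2 PI] in [alpha], equal to [u] for [alpha <= PI / 2] and, by
   the scattering relation, to [u] reflected across [alpha = PI / 2] beyond it.  Hence
   [A_+ u] is smooth exactly when all odd [alpha]-derivatives of [u] vanish on the lines
   [alpha = PI / 2] and [alpha = - PI / 2]: necessity by comparing one-sided limits of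
   derivatives, sufficiency by gluing the two reflected pieces (Schwarz's theorem reduces
   every mixed derivative to pure [alpha]-derivatives).  Near [a = +oo] we have
   [mu_H = cos alpha], and [chi] has vanishing odd derivatives at [PI / 2] iff
   [m |-> chi (acos m)] has vanishing odd derivatives at [0]: [acos] conjugates the
   reflection [m |-> - m] to [alpha |-> PI - alpha], and flatness survives smooth changes
   of variables.  The [S_A^H]-invariance of [h] is the pull-back of the [S_A^E]-invariance
   of [u]. *)

From Stdlib Require Import Reals Lra Lia FunctionalExtensionality List.
From Coquelicot Require Import Coquelicot.
Open Scope R_scope.

(** * Smooth functions of one variable *)

Lemma locally_of_Rabs (x e : R) (P : R -> Prop) :
  0 < e -> (forall t, Rabs (t - x) < e -> P t) -> locally x P.
Proof. intros He H. exists (mkposreal e He). exact H. Qed.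

Definition smooth_on (U : R -> Prop) (f : R -> R) : Prop :=
  forall k x, U x -> ex_derive (Derive_n f k) x.

(* [derivable_upto U n f]: [f] is [n + 1] times differentiable on [U]. *)
Definition derivable_upto (U : R -> Prop) (n : nat) (f : R -> R) : Prop :=
  forall k x, (k <= n)%nat -> U x -> ex_derive (Derive_n f k) x.

Lemma smooth_on_derivable_upto U f n : smooth_on U f -> derivable_upto U n f.
Proof. intros Hf k x _. apply Hf. Qed.

Lemma smooth_on_of_derivable_upto U f : (forall n, derivable_upto U n f) -> smooth_on U f.
Proof. intros Hf k x Hx. apply (Hf k); [lia|exact Hx]. Qed.

Lemma Derive_n_S f k : Derive_n f (S k) = Derive_n (Derive f) k.
Proof.
  apply functional_extensionality. intro x.
  rewrite <- Nat.add_1_r. symmetry. apply (Derive_n_comp f k 1).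
Qed.

Lemma Derive_n_ext_open (U : R -> Prop) f g : open U -> (forall x, U x -> f x = g x) ->
  forall k x, U x -> Derive_n f k x = Derive_n g k x.
Proof.
  intros HU H k x Hx. apply Derive_n_ext_loc. apply (filter_imp U); [exact H|now apply HU].
Qed.

Lemma derivable_upto_ext (U : R -> Prop) n f g : open U -> (forall x, U x -> f x = g x) ->
  derivable_upto U n f -> derivable_upto U n g.
Proof.
  intros HU H Hf k x Hk Hx. apply (ex_derive_ext_loc (Derive_n f k)); [|now apply Hf].
  apply (filter_imp U); [|now apply HU]. intros y Hy. now apply (Derive_n_ext_open U).
Qed.

Lemma smooth_on_ext (U : R -> Prop) f g : open U -> (forall x, U x -> f x = g x) ->
  smooth_on U f -> smooth_on U g.
Proof.
  intros HU H Hf k x Hx. apply (derivable_upto_ext U k f g HU H); [|lia|exact Hx].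
  now apply smooth_on_derivable_upto.
Qed.

Lemma derivable_upto_ex_derive U n f x : derivable_upto U n f -> U x -> ex_derive f x.
Proof. intros Hf Hx. apply (Hf O); [lia|exact Hx]. Qed.

Lemma derivable_upto_Derive U n f : derivable_upto U (S n) f -> derivable_upto U n (Derive f).
Proof. intros Hf k x Hk Hx. rewrite <- Derive_n_S. apply Hf; [lia|exact Hx]. Qed.

Lemma derivable_upto_le U m n f : (m <= n)%nat -> derivable_upto U n f -> derivable_upto U m f.
Proof. intros Hmn Hf k x Hk. apply Hf. lia. Qed.

Lemma derivable_upto_of_Derive (U : R -> Prop) n f d : open U ->
  (forall x, U x -> ex_derive f x) -> (forall x, U x -> Derive f x = d x) ->
  derivable_upto U n d -> derivable_upto U (S n) f.
Proof.
  intros HU Hf Hfd Hd [|k] x Hk Hx; [now apply Hf|].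
  rewrite Derive_n_S. apply (derivable_upto_ext U n d (Derive f)); auto; [|lia].
  intros y Hy. symmetry. now apply Hfd.
Qed.

Lemma locally_ex_derive_n (U : R -> Prop) n m f x : open U -> derivable_upto U n f ->
  (m <= S n)%nat -> U x -> locally x (fun y => forall k, (k <= m)%nat -> ex_derive_n f k y).
Proof.
  intros HU Hf Hm Hx. apply (filter_imp U); [|now apply HU].
  intros y Hy [|k] Hk; [exact I|]. apply Hf; [lia|exact Hy].
Qed.

Lemma derivable_upto_plus (U : R -> Prop) n f g : open U ->
  derivable_upto U n f -> derivable_upto U n g -> derivable_upto U n (fun t => f t + g t).
Proof.
  intros HU Hf Hg k x Hk Hx.
  eapply ex_derive_ext_loc.
  - apply (filter_imp U); [|now apply HU]. intros y Hy. symmetry.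
    apply Derive_n_plus;
      [apply (locally_ex_derive_n U n k f)|apply (locally_ex_derive_n U n k g)]; auto; lia.
  - exact (ex_derive_plus (Derive_n f k) (Derive_n g k) x (Hf k x Hk Hx) (Hg k x Hk Hx)).
Qed.

Lemma derivable_upto_scal U n a f :
  derivable_upto U n f -> derivable_upto U n (fun t => a * f t).
Proof.
  intros Hf k x Hk Hx. eapply ex_derive_ext; [intro t; symmetry; apply Derive_n_scal_l|].
  apply ex_derive_scal. now apply Hf.
Qed.

Lemma derivable_upto_mult (U : R -> Prop) n : open U -> forall f g,
  derivable_upto U n f -> derivable_upto U n g -> derivable_upto U n (fun t => f t * g t).
Proof.
  intros HU. induction n as [|n IH]; intros f g Hf Hg.
  - intros k x Hk Hx. replace k with O by lia.
    apply ex_derive_mult; eapply derivable_upto_ex_derive; eauto.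
  - apply derivable_upto_of_Derive with (fun t => Derive f t * g t + f t * Derive g t); auto.
    + intros x Hx. apply ex_derive_mult; eapply derivable_upto_ex_derive; eauto.
    + intros x Hx. apply Derive_mult; eapply derivable_upto_ex_derive; eauto.
    + assert (Hf' : derivable_upto U n f) by (eapply derivable_upto_le; [|exact Hf]; lia).
      assert (Hg' : derivable_upto U n g) by (eapply derivable_upto_le; [|exact Hg]; lia).
      apply derivable_upto_plus; [exact HU|apply IH|apply IH];
        auto using derivable_upto_Derive.
Qed.

Lemma derivable_upto_comp (U V : R -> Prop) n : open U -> open V -> forall f g,
  smooth_on V f -> (forall x, U x -> V (g x)) ->
  derivable_upto U n g -> derivable_upto U n (fun t => f (g t)).
Proof.
  intros HU HV. induction n as [|n IH]; intros f g Hf HUV Hg.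
  - intros k x Hk Hx. replace k with O by lia. change (ex_derive (fun t => f (g t)) x).
    apply ex_derive_comp; [exact (Hf O _ (HUV x Hx))|eapply derivable_upto_ex_derive; eauto].
  - apply derivable_upto_of_Derive with (fun t => Derive g t * Derive f (g t)); auto.
    + intros x Hx.
      apply ex_derive_comp; [exact (Hf O _ (HUV x Hx))|eapply derivable_upto_ex_derive; eauto].
    + intros x Hx.
      apply Derive_comp; [exact (Hf O _ (HUV x Hx))|eapply derivable_upto_ex_derive; eauto].
    + apply derivable_upto_mult; [exact HU|now apply derivable_upto_Derive|].
      apply IH; [|exact HUV|eapply derivable_upto_le; [|exact Hg]; lia].
      intros k x Hx. rewrite <- Derive_n_S. now apply Hf.
Qed.

Lemma smooth_on_of_Derive (U : R -> Prop) f d : open U ->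
  (forall x, U x -> ex_derive f x) -> (forall x, U x -> Derive f x = d x) ->
  smooth_on U d -> smooth_on U f.
Proof.
  intros HU Hf Hfd Hd k x Hx. apply (derivable_upto_of_Derive U k f d); auto.
  now apply smooth_on_derivable_upto.
Qed.

Lemma smooth_on_plus (U : R -> Prop) f g : open U ->
  smooth_on U f -> smooth_on U g -> smooth_on U (fun t => f t + g t).
Proof.
  intros HU Hf Hg k x Hx. apply (derivable_upto_plus U k); auto using smooth_on_derivable_upto.
Qed.

Lemma smooth_on_scal U a f : smooth_on U f -> smooth_on U (fun t => a * f t).
Proof.
  intros Hf k x Hx. apply (derivable_upto_scal U k); auto using smooth_on_derivable_upto.
Qed.

Lemma smooth_on_mult (U : R -> Prop) f g : open U ->
  smooth_on U f -> smooth_on U g -> smooth_on U (fun t => f t * g t).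
Proof.
  intros HU Hf Hg k x Hx. apply (derivable_upto_mult U k); auto using smooth_on_derivable_upto.
Qed.

Lemma smooth_on_comp (U V : R -> Prop) f g : open U -> open V ->
  smooth_on V f -> smooth_on U g -> (forall x, U x -> V (g x)) ->
  smooth_on U (fun t => f (g t)).
Proof.
  intros HU HV Hf Hg HUV k x Hx.
  apply (derivable_upto_comp U V k); auto using smooth_on_derivable_upto.
Qed.

Lemma smooth_on_const U a : smooth_on U (fun _ => a).
Proof.
  intros [|k] x _; [apply ex_derive_const|].
  eapply ex_derive_ext; [intro t; symmetry; apply Derive_n_const|apply ex_derive_const].
Qed.

Lemma smooth_on_id (U : R -> Prop) : open U -> smooth_on U (fun t => t).
Proof.
  intros HU. apply smooth_on_of_Derive with (fun _ => 1); auto using smooth_on_const.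
  - intros x _. apply ex_derive_id.
  - intros x _. apply Derive_id.
Qed.

Lemma smooth_on_affine (U : R -> Prop) a b : open U -> smooth_on U (fun t => a * t + b).
Proof.
  intros HU. apply smooth_on_plus; auto using smooth_on_scal, smooth_on_id, smooth_on_const.
Qed.

Lemma smooth_on_cos U : smooth_on U cos.
Proof.
  enough (H : forall n, derivable_upto (fun _ => True) n sin /\
                        derivable_upto (fun _ => True) n cos)
    by (intros k x _; exact (smooth_on_of_derivable_upto _ cos (fun n => proj2 (H n)) k x I)).
  induction n as [|n [Hs Hc]].
  - split; intros k x Hk _; replace k with O by lia;
      [exists (cos x); apply is_derive_sin|exists (- sin x); apply is_derive_cos].
  - split.
    + apply derivable_upto_of_Derive with cos; [exact open_true| | |exact Hc].
      * intros x _. eexists. apply is_derive_sin.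
      * intros x _. apply is_derive_unique, is_derive_sin.
    + apply derivable_upto_of_Derive with (fun t => -1 * sin t); [exact open_true| | |].
      * intros x _. eexists. apply is_derive_cos.
      * intros x _. rewrite (is_derive_unique _ _ _ (is_derive_cos x)). ring.
      * now apply derivable_upto_scal.
Qed.

Lemma smooth_on_inv : smooth_on (fun t => 0 < t) Rinv.
Proof.
  apply smooth_on_of_derivable_upto. induction n as [|n IH].
  - intros k x Hk Hx. replace k with O by lia. simpl. auto_derive. lra.
  - apply derivable_upto_of_Derive with (fun t => -1 * (/ t * / t)); [apply open_gt| | |].
    + intros x Hx. auto_derive. lra.
    + intros x Hx. apply is_derive_unique. auto_derive; [lra|field; lra].
    + apply derivable_upto_scal, derivable_upto_mult; [apply open_gt|exact IH|exact IH].
Qed.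

Lemma smooth_on_sqrt : smooth_on (fun t => 0 < t) sqrt.
Proof.
  apply smooth_on_of_derivable_upto. induction n as [|n IH].
  - intros k x Hk Hx. replace k with O by lia. simpl. auto_derive. lra.
  - apply derivable_upto_of_Derive with (fun t => / 2 * / sqrt t); [apply open_gt| | |].
    + intros x Hx. auto_derive. lra.
    + intros x Hx. apply is_derive_unique. auto_derive; [lra|].
      pose proof (sqrt_lt_R0 x Hx). field. lra.
    + apply derivable_upto_scal.
      apply (derivable_upto_comp _ (fun t => 0 < t)); [apply open_gt|apply open_gt| | |exact IH].
      * exact smooth_on_inv.
      * intros x Hx. now apply sqrt_lt_R0.
Qed.

Lemma open_between a b : open (fun t => a < t < b).
Proof. apply open_and; [apply open_gt|apply open_lt]. Qed.

Lemma smooth_on_acos : smooth_on (fun t => -1 < t < 1) acos.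
Proof.
  pose proof (open_between (-1) 1) as HU.
  assert (Hd : forall x, -1 < x < 1 -> is_derive acos x (-1 * / sqrt (1 - x * x))).
  { intros x Hx. apply is_derive_Reals.
    replace (-1 * / sqrt (1 - x * x)) with (-1 / sqrt (1 - x²)) by (unfold Rsqr, Rdiv; ring).
    apply (derive_pt_eq acos x _ (derivable_pt_acos x Hx)), derive_pt_acos. }
  apply smooth_on_of_Derive with (fun x => -1 * / sqrt (1 - x * x)); [exact HU| | |].
  - intros x Hx. eexists. now apply Hd.
  - intros x Hx. apply is_derive_unique. now apply Hd.
  - apply smooth_on_scal.
    apply (smooth_on_comp _ (fun t => 0 < t) Rinv);
      [exact HU|apply open_gt|exact smooth_on_inv| |].
    + apply (smooth_on_comp _ (fun t => 0 < t) sqrt);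
        [exact HU|apply open_gt|exact smooth_on_sqrt| |].
      * apply smooth_on_ext with (fun t => 1 + -1 * (t * t)); [exact HU|intros; ring|].
        apply smooth_on_plus; [exact HU|apply smooth_on_const|].
        apply smooth_on_scal, smooth_on_mult; auto using smooth_on_id.
      * intros x Hx. nra.
    + intros x Hx. apply sqrt_lt_R0. nra.
Qed.

Lemma Derive_n_comp_affine (U : R -> Prop) f a b : open U -> smooth_on U f ->
  forall k x, U (a * x + b) ->
  Derive_n (fun t => f (a * t + b)) k x = a ^ k * Derive_n f k (a * x + b).
Proof.
  intros HU Hf k. induction k as [|k IH]; intros x Hx; [simpl; ring|].
  assert (Hlin : forall y, ex_derive (fun t => a * t + b) y /\ Derive (fun t => a * t + b) y = a).
  { intro y. split; [auto_derive; exact I|].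
    apply is_derive_unique. auto_derive; [exact I|ring]. }
  assert (Hloc : locally x (fun t => U (a * t + b))).
  { apply (ex_derive_continuous _ _ (proj1 (Hlin x))). exact (HU _ Hx). }
  simpl. rewrite (Derive_ext_loc _ (fun t => a ^ k * Derive_n f k (a * t + b)))
    by exact (filter_imp _ _ IH Hloc).
  rewrite Derive_scal, (Derive_comp (Derive_n f k)); [|now apply Hf|apply Hlin].
  rewrite (proj2 (Hlin x)). ring.
Qed.

Definition flat (f : R -> R) (x : R) : Prop := forall k, Derive_n f k x = 0.

Definition odd_flat (f : R -> R) (x : R) : Prop := forall k, Nat.Odd k -> Derive_n f k x = 0.

(* Induction on the order, carrying a smooth factor [c] through the Leibniz rule. *)
Lemma flat_comp_mult (U V : R -> Prop) g x : open U -> open V -> smooth_on U g ->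
  (forall y, U y -> V (g y)) -> U x -> forall k f c, smooth_on V f -> flat f (g x) ->
  smooth_on U c -> Derive_n (fun t => f (g t) * c t) k x = 0.
Proof.
  intros HU HV Hg HUV Hx k. induction k as [|k IH]; intros f c Hf Hflat Hc.
  - simpl. specialize (Hflat O). simpl in Hflat. rewrite Hflat. ring.
  - assert (Hfg : smooth_on U (fun t => f (g t))) by now apply (smooth_on_comp U V).
    assert (Hf' : smooth_on V (Derive f))
      by (intros j y Hy; rewrite <- Derive_n_S; now apply Hf).
    assert (Hg' : smooth_on U (Derive g)) by (intros j y Hy; rewrite <- Derive_n_S; now apply Hg).
    assert (Hc' : smooth_on U (Derive c)) by (intros j y Hy; rewrite <- Derive_n_S; now apply Hc).
    rewrite Derive_n_S, (Derive_n_ext_open U _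
      (fun t => Derive f (g t) * (Derive g t * c t) + f (g t) * Derive c t));
      [|exact HU| |exact Hx].
    2: { intros y Hy. rewrite Derive_mult, Derive_comp; [ring|apply (Hf O _ (HUV y Hy))|
           apply (Hg O y Hy)|apply (Hfg O y Hy)|apply (Hc O y Hy)]. }
    rewrite Derive_n_plus, IH, IH; try assumption; [ring| | | |].
    + intros j. rewrite <- Derive_n_S. apply Hflat.
    + now apply smooth_on_mult.
    + apply (locally_ex_derive_n U k k); [exact HU| |lia|exact Hx].
      apply smooth_on_derivable_upto, smooth_on_mult; [exact HU| |now apply smooth_on_mult].
      now apply (smooth_on_comp U V).
    + apply (locally_ex_derive_n U k k); [exact HU| |lia|exact Hx].
      now apply smooth_on_derivable_upto, smooth_on_mult.
Qed.

Lemma flat_comp (U V : R -> Prop) f g x : open U -> open V -> smooth_on V f -> smooth_on U g ->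
  (forall y, U y -> V (g y)) -> U x -> flat f (g x) -> flat (fun t => f (g t)) x.
Proof.
  intros HU HV Hf Hg HUV Hx Hflat k.
  rewrite (Derive_n_ext _ (fun t => f (g t) * (fun _ => 1) t)) by (intro; ring).
  apply (flat_comp_mult U V g x); auto using smooth_on_const.
Qed.

Section Reflection.
Variables (U : R -> Prop) (f : R -> R) (c : R).
Hypotheses (HU : open U) (Hf : smooth_on U f) (Hc : U c)
  (Hsym : forall t, U t -> U (2 * c - t)).

Lemma smooth_on_reflection : smooth_on U (fun t => f (2 * c - t)).
Proof.
  apply smooth_on_ext with (fun t => f (-1 * t + 2 * c)); [exact HU|intros; f_equal; ring|].
  apply (smooth_on_comp U U); auto using smooth_on_affine.
  intros t Ht. replace (-1 * t + 2 * c) with (2 * c - t) by ring. now apply Hsym.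
Qed.

Lemma smooth_on_sub_reflection : smooth_on U (fun t => f t - f (2 * c - t)).
Proof.
  apply smooth_on_ext with (fun t => f t + -1 * f (2 * c - t)); [exact HU|intros; ring|].
  apply smooth_on_plus; auto using smooth_on_scal, smooth_on_reflection.
Qed.

Lemma Derive_n_reflection k :
  Derive_n (fun t => f (2 * c - t)) k c = (-1) ^ k * Derive_n f k c.
Proof.
  rewrite (Derive_n_ext (fun t => f (2 * c - t)) (fun t => f (-1 * t + 2 * c)))
    by (intro; f_equal; ring).
  rewrite (Derive_n_comp_affine U f (-1) (2 * c)); try assumption;
    replace (-1 * c + 2 * c) with c by ring; [reflexivity|exact Hc].
Qed.

Lemma Derive_n_sub_reflection k :
  Derive_n (fun t => f t - f (2 * c - t)) k c = (1 - (-1) ^ k) * Derive_n f k c.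
Proof.
  rewrite Derive_n_minus, Derive_n_reflection; [ring|apply (locally_ex_derive_n U k k)..];
    auto using smooth_on_derivable_upto, smooth_on_reflection.
Qed.

Lemma odd_flat_iff_flat_sub_reflection :
  odd_flat f c <-> flat (fun t => f t - f (2 * c - t)) c.
Proof.
  unfold odd_flat, flat. split; intros H k; rewrite ?Derive_n_sub_reflection.
  - destruct (Nat.Even_or_Odd k) as [[n ->]|Ho]; [rewrite pow_1_even; ring|].
    rewrite (H k Ho). ring.
  - intros [n ->]. specialize (H (2 * n + 1)%nat).
    rewrite Derive_n_sub_reflection in H. rewrite Nat.add_1_r, pow_1_odd in *. lra.
Qed.
End Reflection.

Lemma cos_in_interval a : 0 < a < PI -> -1 < cos a < 1.
Proof.
  intros [H0 Hpi]. pose proof (sin_gt_0 a H0 Hpi). pose proof (sin2_cos2 a).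
  unfold Rsqr in *. split; nra.
Qed.

(* [acos] conjugates [m |-> - m] to [a |-> PI - a]; flatness passes through [acos] and [cos]. *)
Lemma odd_flat_comp_acos chi : smooth_on (fun _ => True) chi ->
  odd_flat chi (PI / 2) <-> odd_flat (fun m => chi (acos m)) 0.
Proof.
  intros Hchi. pose proof PI_RGT_0.
  set (I1 := fun t => -1 < t < 1). set (I0 := fun t => 0 < t < PI).
  assert (HI1 : open I1) by (unfold I1; apply open_between).
  assert (HI0 : open I0) by (unfold I0; apply open_between).
  assert (HI1sym : forall t, I1 t -> I1 (2 * 0 - t)) by (unfold I1; intros; lra).
  assert (Hphi : smooth_on I1 (fun m => chi (acos m))).
  { apply (smooth_on_comp I1 (fun _ => True)); auto using open_true, smooth_on_acos. }
  assert (Hdelta := smooth_on_sub_reflection (fun _ => True) chi (PI / 2) open_true Hchi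
                      (fun _ _ => I)).
  assert (Heps := smooth_on_sub_reflection I1 _ 0 HI1 Hphi HI1sym).
  rewrite (odd_flat_iff_flat_sub_reflection (fun _ => True)); auto using open_true.
  rewrite (odd_flat_iff_flat_sub_reflection I1); [|auto|auto|unfold I1; lra|auto].
  set (delta := fun a => chi a - chi (2 * (PI / 2) - a)) in *.
  set (eps := fun m => chi (acos m) - chi (acos (2 * 0 - m))) in *.
  assert (Hconj : forall m, eps m = delta (acos m)).
  { intro m. unfold eps, delta. replace (2 * 0 - m) with (- m) by ring.
    rewrite acos_opp. do 3 f_equal. field. }
  split; intros Hflat k.
  - rewrite (Derive_n_ext _ _ _ _ Hconj).
    apply (flat_comp I1 (fun _ => True)); auto using open_true, smooth_on_acos.
    + unfold I1; lra.
    + now rewrite acos_0.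
  - rewrite <- (Derive_n_ext_open I0 (fun a => eps (cos a)) delta HI0); [| |unfold I0; lra].
    + apply (flat_comp I0 I1); auto using smooth_on_cos.
      * exact cos_in_interval.
      * unfold I0; lra.
      * now rewrite cos_PI2.
    + intros a Ha. rewrite Hconj, acos_cos; [reflexivity|unfold I0 in Ha; lra].
Qed.

(* Derivatives of smooth functions are continuous, so agreement on an open set
   reaching [c] through a proper filter determines all derivatives at [c]. *)
Lemma Derive_n_eq_of_eq_near (F : (R -> Prop) -> Prop) {FF : ProperFilter F}
  (c : R) (W : R -> Prop) f g :
  filter_le F (locally c) -> open W -> F W ->
  smooth_on (fun _ => True) f -> smooth_on (fun _ => True) g ->
  (forall y, W y -> f y = g y) -> forall k, Derive_n f k c = Derive_n g k c.
Proof.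
  intros HFc HW HFW Hf Hg Hfg k.
  apply (filterlim_locally_unique (F := F) (Derive_n f k)).
  - apply (filterlim_filter_le_1 _ HFc), ex_derive_continuous, (Hf k c I).
  - apply (filterlim_ext_loc (Derive_n g k)).
    + apply (filter_imp W); [|exact HFW]. intros y Hy. symmetry.
      now apply (Derive_n_ext_open W).
    + apply (filterlim_filter_le_1 _ HFc), ex_derive_continuous, (Hg k c I).
Qed.

Lemma odd_flat_of_reflection (F1 F2 : (R -> Prop) -> Prop) {FF1 : ProperFilter F1}
  {FF2 : ProperFilter F2} (c : R) (W1 W2 : R -> Prop) f g :
  filter_le F1 (locally c) -> filter_le F2 (locally c) -> open W1 -> open W2 ->
  F1 W1 -> F2 W2 -> smooth_on (fun _ => True) f -> smooth_on (fun _ => True) g ->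
  (forall y, W1 y -> f y = g y) -> (forall y, W2 y -> f y = g (2 * c - y)) -> odd_flat g c.
Proof.
  intros HF1 HF2 HW1 HW2 H1 H2 Hf Hg E1 E2 k [n ->].
  assert (Hr : smooth_on (fun _ => True) (fun y => g (2 * c - y)))
    by (apply smooth_on_reflection; auto using open_true).
  pose proof (Derive_n_eq_of_eq_near F1 c W1 f g HF1 HW1 H1 Hf Hg E1 (2 * n + 1)) as D1.
  pose proof (Derive_n_eq_of_eq_near F2 c W2 f _ HF2 HW2 H2 Hf Hr E2 (2 * n + 1)) as D2.
  rewrite (Derive_n_reflection (fun _ => True)) in D2; auto using open_true.
  rewrite Nat.add_1_r, pow_1_odd in *. lra.
Qed.

Lemma odd_flat_comp_opp chi c : smooth_on (fun _ => True) chi ->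
  odd_flat (fun t => chi (- t)) c <-> odd_flat chi (- c).
Proof.
  intros Hchi. unfold odd_flat.
  assert (E : forall k, Derive_n (fun t => chi (- t)) k c = (-1) ^ k * Derive_n chi k (- c)).
  { intro k. rewrite (Derive_n_ext (fun t => chi (- t)) (fun t => chi (-1 * t + 0)))
      by (intro; f_equal; ring).
    rewrite (Derive_n_comp_affine (fun _ => True)); auto using open_true.
    do 2 f_equal. ring. }
  split; intros H k Hk; specialize (H k Hk); destruct Hk as [n ->];
    rewrite ?E, Nat.add_1_r, pow_1_odd in *; lra.
Qed.

(** * Smooth functions of two variables *)

Lemma pder_app l l' f : pder (l ++ l') f = pder l (pder l' f).
Proof. induction l as [|b l IH]; simpl; [reflexivity|now rewrite IH]. Qed.

Lemma smooth2_pder l f : smooth2 f -> smooth2 (pder l f).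
Proof. intros H l' x y. rewrite <- pder_app. apply H. Qed.

Lemma smooth2_ext f g : smooth2 f -> (forall x y, f x y = g x y) -> smooth2 g.
Proof.
  intros Hf H. replace g with f; [exact Hf|].
  apply functional_extensionality; intro x; apply functional_extensionality; apply H.
Qed.

Definition square (x0 y0 e x y : R) : Prop := Rabs (x - x0) < e /\ Rabs (y - y0) < e.

Lemma pder_ext_square f g x0 y0 e :
  (forall x y, square x0 y0 e x y -> f x y = g x y) ->
  forall l x y, square x0 y0 e x y -> pder l f x y = pder l g x y.
Proof.
  intros H l. induction l as [|b l IH]; intros x y [Hx Hy]; simpl.
  - now apply H.
  - destruct b; apply Derive_ext_loc.
    + apply locally_of_Rabs with (e - Rabs (x - x0)); [lra|]. intros t Ht.
      apply IH. split; [|exact Hy].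
      replace (t - x0) with ((t - x) + (x - x0)) by ring.
      eapply Rle_lt_trans; [apply Rabs_triang|lra].
    + apply locally_of_Rabs with (e - Rabs (y - y0)); [lra|]. intros t Ht.
      apply IH. split; [exact Hx|].
      replace (t - y0) with ((t - y) + (y - y0)) by ring.
      eapply Rle_lt_trans; [apply Rabs_triang|lra].
Qed.

Lemma smooth2_locally f :
  (forall x0 y0, exists g e, 0 < e /\ smooth2 g /\
     forall x y, square x0 y0 e x y -> f x y = g x y) -> smooth2 f.
Proof.
  intros H l x y. destruct (H x y) as [g [e [He [Hg Hfg]]]].
  assert (Hl : forall u v, square x y e u v -> pder l f u v = pder l g u v)
    by now apply pder_ext_square.
  assert (Hc : Rabs 0 < e) by now rewrite Rabs_R0.
  destruct (Hg l x y) as [Dx [Dy C]]. split; [|split].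
  - eapply ex_derive_ext_loc; [|exact Dx]. apply locally_of_Rabs with e; [exact He|].
    intros t Ht. symmetry. apply Hl. split; [exact Ht|now rewrite Rminus_diag].
  - eapply ex_derive_ext_loc; [|exact Dy]. apply locally_of_Rabs with e; [exact He|].
    intros t Ht. symmetry. apply Hl. split; [now rewrite Rminus_diag|exact Ht].
  - eapply continuity_2d_pt_ext_loc; [|exact C].
    exists (mkposreal e He). intros u v Hu Hv. symmetry. now apply Hl.
Qed.

Lemma pder_plus f g : smooth2 f -> smooth2 g -> forall l x y,
  pder l (fun x y => f x y + g x y) x y = pder l f x y + pder l g x y.
Proof.
  intros Hf Hg l; induction l as [|[|] l IH]; intros x y; simpl; [reflexivity| |].
  - rewrite (Derive_ext _ (fun t => pder l f t y + pder l g t y)) by (intro; apply IH).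
    apply Derive_plus; [apply (Hf l x y)|apply (Hg l x y)].
  - rewrite (Derive_ext _ (fun t => pder l f x t + pder l g x t)) by (intro; apply IH).
    apply Derive_plus; [apply (Hf l x y)|apply (Hg l x y)].
Qed.

Lemma pder_scal f a l x y :
  pder l (fun x y => a * f x y) x y = a * pder l f x y.
Proof.
  revert x y; induction l as [|[|] l IH]; intros x y; simpl; [reflexivity| |].
  - rewrite (Derive_ext _ (fun t => a * pder l f t y)) by (intro; apply IH).
    apply Derive_scal.
  - rewrite (Derive_ext _ (fun t => a * pder l f x t)) by (intro; apply IH).
    apply Derive_scal.
Qed.

Lemma smooth2_plus f g : smooth2 f -> smooth2 g -> smooth2 (fun x y => f x y + g x y).
Proof.
  intros Hf Hg l x y.
  destruct (Hf l x y) as [Fx [Fy Fc]]. destruct (Hg l x y) as [Gx [Gy Gc]].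
  split; [|split].
  - eapply ex_derive_ext. { intro t. symmetry. now apply pder_plus. }
    exact (ex_derive_plus (fun t => pder l f t y) (fun t => pder l g t y) x Fx Gx).
  - eapply ex_derive_ext. { intro t. symmetry. now apply pder_plus. }
    exact (ex_derive_plus (fun t => pder l f x t) (fun t => pder l g x t) y Fy Gy).
  - eapply continuity_2d_pt_ext. { intros u v. symmetry. now apply pder_plus. }
    now apply continuity_2d_pt_plus.
Qed.

Lemma smooth2_scal f a : smooth2 f -> smooth2 (fun x y => a * f x y).
Proof.
  intros Hf l x y. destruct (Hf l x y) as [Fx [Fy Fc]]. split; [|split].
  - eapply ex_derive_ext. { intro t. symmetry. apply pder_scal. }
    now apply ex_derive_scal.
  - eapply ex_derive_ext. { intro t. symmetry. apply pder_scal. }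
    now apply ex_derive_scal.
  - eapply continuity_2d_pt_ext. { intros u v. symmetry. apply pder_scal. }
    apply continuity_2d_pt_mult; [apply continuity_2d_pt_const|exact Fc].
Qed.

Lemma smooth2_ex_diff_n n : forall f, smooth2 f -> forall x y, ex_diff_n f n x y.
Proof.
  induction n as [|n IH]; intros f Hf x y; destruct (Hf nil x y) as [Dx [Dy C]]; simpl.
  - split; [exact C|exact I].
  - split; [exact C|]. split; [exact Dx|]. split; [exact Dy|].
    split; [apply (IH (pder (true :: nil) f))|apply (IH (pder (false :: nil) f))];
      now apply smooth2_pder.
Qed.

(* The order-one Taylor-Lagrange remainder is [O (max (|u - x|, |v - y|) ^ 2)]. *)
Lemma smooth2_differentiable f : smooth2 f -> forall x y,
  differentiable_pt_lim f x y (pder (true :: nil) f x y) (pder (false :: nil) f x y).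
Proof.
  intros Hf x y.
  destruct (Taylor_Lagrange_2d f 1 x y) as [D [d Hd]].
  { exists (mkposreal 1 Rlt_0_1). intros u v _ _. now apply smooth2_ex_diff_n. }
  assert (DL1 : forall dx dy, DL_pol 1 f x y dx dy =
    f x y + Derive (fun t => f t y) x * dx + Derive (fun z => f x z) y * dy).
  { intros dx dy. unfold DL_pol, differential, partial_derive. simpl.
    unfold Binomial.C; simpl. field. }
  intros eps. pose proof (Rabs_pos D). pose proof (cond_pos eps) as He.
  assert (Hp : 0 < Rmin d (eps / (Rabs D + 1))).
  { apply Rmin_pos; [apply cond_pos|apply Rdiv_lt_0_compat; lra]. }
  exists (mkposreal _ Hp). simpl. intros u v Hu Hv.
  pose proof (Rmin_l d (eps / (Rabs D + 1))). pose proof (Rmin_r d (eps / (Rabs D + 1))).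
  specialize (Hd u v ltac:(lra) ltac:(lra)). rewrite DL1 in Hd.
  set (M := Rmax (Rabs (u - x)) (Rabs (v - y))) in *.
  assert (HM : M * (Rabs D + 1) <= eps).
  { assert (M < eps / (Rabs D + 1)) by (apply Rmax_lub_lt; lra).
    apply Rmult_le_reg_r with (/ (Rabs D + 1)); [apply Rinv_0_lt_compat; lra|].
    rewrite Rmult_assoc, Rinv_r by lra. unfold Rdiv in *. lra. }
  assert (0 <= M) by (eapply Rle_trans; [apply Rabs_pos|apply Rmax_l]).
  pose proof (RRle_abs D). simpl.
  replace (f u v - f x y - _) with
    (f u v - (f x y + Derive (fun t => f t y) x * (u - x) + Derive (fun z => f x z) y * (v - y)))
    by ring.
  eapply Rle_trans; [exact Hd|]. nra.
Qed.

Lemma differentiable_pt_lim_partials f x y lx ly : differentiable_pt_lim f x y lx ly ->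
  is_derive (fun t => f t y) x lx /\ is_derive (fun t => f x t) y ly.
Proof.
  intros H. split; apply is_derive_Reals.
  - replace lx with (lx * 1 + ly * 0) by ring.
    apply (derivable_pt_lim_comp_2d f (fun t => t) (fun _ => y)); [exact H| |].
    + apply derivable_pt_lim_id.
    + apply derivable_pt_lim_const.
  - replace ly with (lx * 0 + ly * 1) by ring.
    apply (derivable_pt_lim_comp_2d f (fun _ => x) (fun t => t)); [exact H| |].
    + apply derivable_pt_lim_const.
    + apply derivable_pt_lim_id.
Qed.

Lemma differentiable_pt_lim_affine a b k x y :
  differentiable_pt_lim (fun u v => a * u + b * v + k) x y a b.
Proof.
  intros eps. exists (mkposreal 1 Rlt_0_1). intros u v _ _.
  replace (a * u + b * v + k - (a * x + b * y + k) - (a * (u - x) + b * (v - y))) with 0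
    by ring.
  rewrite Rabs_R0. apply Rmult_le_pos; [left; apply cond_pos|].
  eapply Rle_trans; [apply Rabs_pos|apply Rmax_l].
Qed.

Definition comp_affine (c d s e : R) (f : R -> R -> R) : R -> R -> R :=
  fun x y => f (x + c * y + d) (e + s * y).

Lemma comp_affine_differentiable c d s e g : smooth2 g -> forall x y,
  let p := x + c * y + d in let q := e + s * y in
  differentiable_pt_lim (comp_affine c d s e g) x y (pder (true :: nil) g p q)
    (c * pder (true :: nil) g p q + s * pder (false :: nil) g p q).
Proof.
  intros Hg x y p q.
  pose proof (differentiable_pt_lim_comp g (fun u v => 1 * u + c * v + d)
    (fun u v => 0 * u + s * v + e) x y _ _ _ _ _ _ (smooth2_differentiable g Hg _ _)
    (differentiable_pt_lim_affine 1 c d x y) (differentiable_pt_lim_affine 0 s e x y)) as H.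
  replace (1 * x + c * y + d) with p in H by (unfold p; ring).
  replace (0 * x + s * y + e) with q in H by (unfold q; ring).
  rewrite Rmult_1_r, Rmult_0_r, Rplus_0_r, Rmult_comm,
    (Rmult_comm (pder (false :: nil) g p q)) in H.
  eapply differentiable_pt_lim_ext; [|exact H].
  exists (mkposreal 1 Rlt_0_1). intros u v _ _. unfold comp_affine. f_equal; ring.
Qed.

Lemma pder_comp_affine c d s e f : smooth2 f -> forall l, exists g, smooth2 g /\
  forall x y, pder l (comp_affine c d s e f) x y = comp_affine c d s e g x y.
Proof.
  intros Hf l. induction l as [|b l [g [Hg Heq]]]; [now exists f|].
  pose proof (fun x y => differentiable_pt_lim_partials _ _ _ _ _
    (comp_affine_differentiable c d s e g Hg x y)) as Hpartial.
  destruct b; simpl.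
  - exists (pder (true :: nil) g). split; [now apply smooth2_pder|]. intros x y.
    rewrite (Derive_ext _ (fun t => comp_affine c d s e g t y)) by (intro; apply Heq).
    apply is_derive_unique, Hpartial.
  - exists (fun x y => c * pder (true :: nil) g x y + s * pder (false :: nil) g x y).
    split; [now apply smooth2_plus; apply smooth2_scal; apply smooth2_pder|]. intros x y.
    rewrite (Derive_ext _ (fun t => comp_affine c d s e g x t)) by (intro; apply Heq).
    apply is_derive_unique, Hpartial.
Qed.

Lemma smooth2_comp_affine c d s e f : smooth2 f -> smooth2 (comp_affine c d s e f).
Proof.
  intros Hf l x y. destruct (pder_comp_affine c d s e f Hf l) as [g [Hg Heq]].
  pose proof (comp_affine_differentiable c d s e g Hg x y) as HD.
  destruct (differentiable_pt_lim_partials _ _ _ _ _ HD) as [Dx Dy].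
  split; [|split].
  - eapply ex_derive_ext; [intro t; symmetry; apply Heq|]. eexists; exact Dx.
  - eapply ex_derive_ext; [intro t; symmetry; apply Heq|]. eexists; exact Dy.
  - eapply continuity_2d_pt_ext; [intros u v; symmetry; apply Heq|].
    apply differentiable_continuity_pt. do 2 eexists; exact HD.
Qed.

Fixpoint count_fst (l : list bool) : nat :=
  match l with nil => O | b :: l' => if b then S (count_fst l') else count_fst l' end.
Fixpoint count_snd (l : list bool) : nat :=
  match l with nil => O | b :: l' => if b then count_snd l' else S (count_snd l') end.

Definition comp_snd (e s : R) (f : R -> R -> R) : R -> R -> R := fun x y => f x (e + s * y).

Lemma smooth2_comp_snd e s f : smooth2 f -> smooth2 (comp_snd e s f).
Proof.
  intros Hf. apply smooth2_ext with (comp_affine 0 0 s e f); [now apply smooth2_comp_affine|].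
  intros x y. unfold comp_affine, comp_snd. f_equal. ring.
Qed.

Lemma pder_comp_snd e s f : smooth2 f -> forall l x y,
  pder l (comp_snd e s f) x y = s ^ count_snd l * pder l f x (e + s * y).
Proof.
  intros Hf l. induction l as [|[|] l IH]; intros x y; simpl.
  - unfold comp_snd. ring.
  - rewrite (Derive_ext _ (fun t => s ^ count_snd l * pder l f t (e + s * y)))
      by (intro; apply IH).
    apply Derive_scal.
  - rewrite (Derive_ext _ (fun t => s ^ count_snd l * pder l f x (e + s * t)))
      by (intro; apply IH).
    rewrite Derive_scal, (Derive_comp (fun z => pder l f x z) (fun t => e + s * t)).
    + replace (Derive (fun t => e + s * t) y) with s; [ring|].
      symmetry. apply is_derive_unique. auto_derive; [exact I|ring].
    + apply (Hf l x (e + s * y)).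
    + auto_derive. exact I.
Qed.

Lemma pder_repeat_snd k f x y : pder (repeat false k) f x y = Derive_n (f x) k y.
Proof.
  revert y. induction k as [|k IH]; intro y; [reflexivity|].
  simpl. apply Derive_ext. intro t. apply IH.
Qed.

Lemma pder_swap f : smooth2 f -> forall x y,
  pder (true :: false :: nil) f x y = pder (false :: true :: nil) f x y.
Proof.
  intros Hf x y. simpl. apply Schwarz.
  - exists (mkposreal 1 Rlt_0_1). intros u v _ _.
    split; [apply (Hf nil u v)|]. split; [apply (Hf nil u v)|].
    split; [apply (Hf (false :: nil) u v)|apply (Hf (true :: nil) u v)].
  - apply (Hf (true :: false :: nil) x y).
  - apply (Hf (false :: true :: nil) x y).
Qed.

Lemma pder_snd_repeat_fst j : forall f, smooth2 f -> forall x y,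
  pder (false :: repeat true j) f x y = pder (repeat true j) (pder (false :: nil) f) x y.
Proof.
  induction j as [|j IH]; intros f Hf x y; [reflexivity|].
  change (pder (false :: true :: nil) (pder (repeat true j) f) x y =
    pder (repeat true (S j)) (pder (false :: nil) f) x y).
  rewrite <- pder_swap by now apply smooth2_pder.
  simpl. apply Derive_ext. intro t. now apply IH.
Qed.

Lemma pder_sort l : forall f, smooth2 f -> forall x y,
  pder l f x y = pder (repeat true (count_fst l)) (pder (repeat false (count_snd l)) f) x y.
Proof.
  induction l as [|[|] l IH]; intros f Hf x y; simpl; [reflexivity| |].
  - apply Derive_ext. intro t. now apply IH.
  - rewrite (Derive_ext _ (fun t => pder (repeat true (count_fst l))
      (pder (repeat false (count_snd l)) f) x t)) by (intro; now apply IH).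
    apply (pder_snd_repeat_fst _ (pder (repeat false (count_snd l)) f)).
    now apply smooth2_pder.
Qed.

(* Schwarz lets us take the [y]-derivatives first; [x]-derivatives then preserve
   vanishing along the line [y = c]. *)
Lemma pder_odd_snd_vanish f c : smooth2 f ->
  (forall x, odd_flat (f x) c) ->
  forall l x, Nat.Odd (count_snd l) -> pder l f x c = 0.
Proof.
  intros Hf Hodd l x Hl. rewrite pder_sort by exact Hf.
  assert (Hline : forall x', pder (repeat false (count_snd l)) f x' c = 0)
    by (intro x'; rewrite pder_repeat_snd; now apply Hodd).
  generalize (pder (repeat false (count_snd l)) f) Hline. clear.
  intros g Hg. revert x. induction (count_fst l) as [|j IH]; intro x; simpl; [apply Hg|].
  rewrite (Derive_ext _ (fun _ => 0)) by (intro; apply IH). apply Derive_const.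
Qed.

Definition glue (c : R) (f g : R -> R -> R) : R -> R -> R :=
  fun x y => if Rle_dec y c then f x y else g x y.

Lemma is_derive_glue_point (p q : R -> R) c d :
  is_derive p c d -> is_derive q c d -> p c = q c ->
  is_derive (fun t => if Rle_dec t c then p t else q t) c d.
Proof.
  intros Hp Hq Hpq. apply is_derive_Reals in Hp, Hq. apply is_derive_Reals.
  intros eps Heps. destruct (Hp eps Heps) as [d1 H1]. destruct (Hq eps Heps) as [d2 H2].
  assert (Hd : 0 < Rmin d1 d2) by (apply Rmin_pos; apply cond_pos).
  exists (mkposreal _ Hd). intros h Hh0 Hh. simpl in Hh.
  pose proof (Rmin_l d1 d2). pose proof (Rmin_r d1 d2).
  destruct (Rle_dec c c) as [_|Hn]; [|lra].
  destruct (Rle_dec (c + h) c).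
  - apply H1; [exact Hh0|lra].
  - rewrite Hpq. apply H2; [exact Hh0|lra].
Qed.

Section Glue.
Variables (c : R) (f g : R -> R -> R).
Hypotheses (Hf : smooth2 f) (Hg : smooth2 g)
  (Hline : forall l x, pder l f x c = pder l g x c).

Lemma is_derive_glue_snd l x y : is_derive (fun t => glue c (pder l f) (pder l g) x t) y
  (glue c (pder (false :: l) f) (pder (false :: l) g) x y).
Proof.
  unfold glue. destruct (Rtotal_order y c) as [Hlt|[<-|Hgt]].
  - destruct (Rle_dec y c) as [_|n]; [|lra].
    eapply is_derive_ext_loc; [|apply Derive_correct, (Hf l x y)].
    apply locally_of_Rabs with (c - y); [lra|]. intros t Ht. apply Rabs_def2 in Ht.
    destruct (Rle_dec t c) as [_|n]; [reflexivity|lra].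
  - destruct (Rle_dec y y) as [_|n]; [|lra].
    apply is_derive_glue_point; [apply Derive_correct, (Hf l x y)| |apply Hline].
    rewrite (Hline (false :: l)). apply Derive_correct, (Hg l x y).
  - destruct (Rle_dec y c) as [n|_]; [lra|].
    eapply is_derive_ext_loc; [|apply Derive_correct, (Hg l x y)].
    apply locally_of_Rabs with (y - c); [lra|]. intros t Ht. apply Rabs_def2 in Ht.
    destruct (Rle_dec t c) as [n|_]; [lra|reflexivity].
Qed.

Lemma pder_glue l x y : pder l (glue c f g) x y = glue c (pder l f) (pder l g) x y.
Proof.
  revert x y. induction l as [|[|] l IH]; intros x y; simpl; [reflexivity| |].
  - rewrite (Derive_ext _ (fun t => glue c (pder l f) (pder l g) t y)) by (intro; apply IH).
    unfold glue. now destruct (Rle_dec y c).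
  - rewrite (Derive_ext _ (fun t => glue c (pder l f) (pder l g) x t)) by (intro; apply IH).
    apply is_derive_unique, is_derive_glue_snd.
Qed.

Lemma continuity_2d_pt_glue l x y : continuity_2d_pt (glue c (pder l f) (pder l g)) x y.
Proof.
  destruct (Rtotal_order y c) as [Hlt|[<-|Hgt]].
  - eapply continuity_2d_pt_ext_loc; [|apply (Hf l x y)].
    assert (Hp : 0 < c - y) by lra. exists (mkposreal _ Hp). simpl. intros u v _ Hv.
    apply Rabs_def2 in Hv. unfold glue. destruct (Rle_dec v c) as [_|n]; [reflexivity|lra].
  - intros eps. destruct (proj2 (proj2 (Hf l x y)) eps) as [d1 H1].
    destruct (proj2 (proj2 (Hg l x y)) eps) as [d2 H2].
    assert (Hd : 0 < Rmin d1 d2) by (apply Rmin_pos; apply cond_pos).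
    pose proof (Rmin_l d1 d2). pose proof (Rmin_r d1 d2).
    exists (mkposreal _ Hd). simpl. intros u v Hu Hv. unfold glue.
    destruct (Rle_dec y y) as [_|n]; [|lra].
    destruct (Rle_dec v y); [apply H1; lra|]. rewrite (Hline l). apply H2; lra.
  - eapply continuity_2d_pt_ext_loc; [|apply (Hg l x y)].
    assert (Hp : 0 < y - c) by lra. exists (mkposreal _ Hp). simpl. intros u v _ Hv.
    apply Rabs_def2 in Hv. unfold glue. destruct (Rle_dec v c) as [n|_]; [lra|reflexivity].
Qed.

Lemma smooth2_glue : smooth2 (glue c f g).
Proof.
  intros l x y. split; [|split].
  - eapply ex_derive_ext; [intro t; symmetry; apply pder_glue|].
    unfold glue. destruct (Rle_dec y c); [apply (Hf l x y)|apply (Hg l x y)].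
  - eapply ex_derive_ext; [intro t; symmetry; apply pder_glue|].
    eexists. apply is_derive_glue_snd.
  - eapply continuity_2d_pt_ext; [intros u v; symmetry; apply pder_glue|].
    apply continuity_2d_pt_glue.
Qed.
End Glue.

(* Reflecting [y] across [c] multiplies [pder l] by [(-1) ^ count_snd l], so the two
   pieces match to all orders along the line exactly when the odd [y]-derivatives vanish. *)
Lemma smooth2_glue_reflection f c : smooth2 f ->
  (forall x, odd_flat (f x) c) ->
  smooth2 (glue c f (comp_snd (2 * c) (-1) f)) /\
  smooth2 (glue c (comp_snd (2 * c) (-1) f) f).
Proof.
  intros Hf Hodd.
  assert (Hline : forall l x, pder l f x c = pder l (comp_snd (2 * c) (-1) f) x c).
  { intros l x. rewrite pder_comp_snd by exact Hf.
    replace (2 * c + -1 * c) with c by ring.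
    destruct (Nat.Even_or_Odd (count_snd l)) as [[n En]|Ho].
    - rewrite En, pow_1_even. ring.
    - rewrite (pder_odd_snd_vanish f c Hf Hodd l x Ho). ring. }
  pose proof (smooth2_comp_snd (2 * c) (-1) f Hf).
  split; apply smooth2_glue; auto.
Qed.

Lemma smooth_on_section f x : smooth2 f -> smooth_on (fun _ => True) (f x).
Proof.
  intros Hf k y _. eapply ex_derive_ext; [intro t; apply pder_repeat_snd|].
  apply (Hf (repeat false k) x y).
Qed.

(** * The scattering relation in fan-beam coordinates *)

Lemma Int_part_spec r (z : Z) : IZR z <= r < IZR z + 1 -> Int_part r = z.
Proof.
  intros [H1 H2]. unfold Int_part.
  rewrite <- (tech_up r (z + 1)); [ring| |]; rewrite plus_IZR; lra.
Qed.

Lemma red_alpha_shift a (z : Z) :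
  -(PI / 2) <= a - 2 * PI * IZR z < 3 * (PI / 2) -> red_alpha a = a - 2 * PI * IZR z.
Proof.
  intros H. pose proof PI_RGT_0. unfold red_alpha, frac_part.
  rewrite (Int_part_spec _ z); [field; lra|].
  split.
  - apply Rmult_le_reg_l with (2 * PI); [lra|]. field_simplify; lra.
  - apply Rmult_lt_reg_l with (2 * PI); [lra|]. field_simplify; lra.
Qed.

Lemma exists_period_shift y : exists z : Z, 0 <= y - 2 * PI * IZR z < 2 * PI.
Proof.
  pose proof PI_RGT_0. destruct (base_Int_part (y / (2 * PI))) as [H1 H2].
  exists (Int_part (y / (2 * PI))).
  set (r := y / (2 * PI)) in *. assert (y = 2 * PI * r) by (unfold r; field; lra).
  split; nra.
Qed.

Lemma periodic_b_Z {A : Type} (u : R -> A -> R) : periodic_b u ->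
  forall (n : Z) b a, u (b + 2 * PI * IZR n) a = u b a.
Proof.
  intros Hp n. induction n using Z.peano_ind; intros b a.
  - f_equal. simpl. ring.
  - rewrite <- (IHn b), <- Z.add_1_r, plus_IZR, <- (Hp (b + 2 * PI * IZR n)).
    f_equal. ring.
  - rewrite <- (IHn b), <- Z.sub_1_r, minus_IZR, <- (Hp (b + 2 * PI * (IZR n - 1))).
    f_equal. ring.
Qed.

(* Coordinates [(theta, alpha)] with [theta = beta + alpha]. *)
Definition theta_coords (F : R -> R -> R) : R -> R -> R := fun x y => F (x - y) y.

Definition Aplus_theta (u : R -> R -> R) : R -> R -> R := fun x y => Aplus u (x - y) y.

Lemma smooth2_theta_coords F : smooth2 F -> smooth2 (theta_coords F).
Proof.
  intros HF. apply smooth2_ext with (comp_affine (-1) 0 1 0 F); [now apply smooth2_comp_affine|].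
  intros x y. unfold comp_affine, theta_coords. f_equal; ring.
Qed.

Lemma smooth2_Aplus_theta u : smooth2 (Aplus_theta u) <-> smooth2 (Aplus u).
Proof.
  split; intros H; [apply smooth2_ext with (comp_affine 1 0 1 0 (Aplus_theta u))
                   |apply smooth2_ext with (comp_affine (-1) 0 1 0 (Aplus u))];
    try now apply smooth2_comp_affine.
  all: intros x y; unfold comp_affine, Aplus_theta; f_equal; ring.
Qed.

Lemma Aplus_theta_shift u F (z : Z) x y : periodic_b u -> strip_ext F u ->
  -(PI / 2) <= y - 2 * PI * IZR z < 3 * (PI / 2) ->
  Aplus_theta u x y = let w := y - 2 * PI * IZR z in
    if Rle_dec w (PI / 2) then theta_coords F x w else theta_coords F x (PI - w).
Proof.
  intros Hper HF Hy. unfold Aplus_theta, Aplus, theta_coords.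
  rewrite (red_alpha_shift y z Hy). cbv zeta.
  set (w := y - 2 * PI * IZR z) in *.
  destruct (Rle_dec w (PI / 2)) as [Hw|Hw]; unfold SE; simpl; rewrite HF by lra.
  - replace (x - y) with ((x - w) + 2 * PI * IZR (- z)) by (unfold w; rewrite opp_IZR; ring).
    apply periodic_b_Z, Hper.
  - replace (x - y + PI + 2 * w) with ((x - (PI - w)) + 2 * PI * IZR (1 - z))
      by (unfold w; rewrite minus_IZR; simpl; ring).
    apply periodic_b_Z, Hper.
Qed.

Lemma odd_flat_theta_iff F th : smooth2 F ->
  (forall k, Nat.Odd k ->
     Derive_n (fun m => F (th - acos m) (acos m)) k 0 = 0 /\
     Derive_n (fun m => F (th + acos m) (- acos m)) k 0 = 0) <->
  odd_flat (theta_coords F th) (PI / 2) /\ odd_flat (theta_coords F th) (- (PI / 2)).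
Proof.
  intros SF.
  assert (Sg : smooth_on (fun _ => True) (theta_coords F th))
    by now apply smooth_on_section, smooth2_theta_coords.
  assert (Sr : smooth_on (fun _ => True) (fun a => theta_coords F th (- a))).
  { apply (smooth_on_comp _ (fun _ => True)); auto using open_true.
    apply smooth_on_ext with (fun a => -1 * a + 0); auto using open_true, smooth_on_affine.
    intros; ring. }
  rewrite (odd_flat_comp_acos _ Sg), <- (odd_flat_comp_opp _ (PI / 2) Sg),
    (odd_flat_comp_acos _ Sr).
  assert (E : forall m, F (th + acos m) (- acos m) = theta_coords F th (- acos m))
    by (intro m; unfold theta_coords; f_equal; ring).
  split.
  - intros H. split; intros k Hk; [apply (H k Hk)|].
    rewrite <- (Derive_n_ext _ _ _ _ E). apply (H k Hk).
  - intros [H1 H2] k Hk. split; [apply (H1 k Hk)|].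
    rewrite (Derive_n_ext _ _ _ _ E). apply (H2 k Hk).
Qed.

Lemma at_left_between a c : a < c -> at_left c (fun y => a < y < c).
Proof.
  intros H. apply locally_of_Rabs with (c - a); [lra|].
  intros t Ht Htc. apply Rabs_def2 in Ht. lra.
Qed.

Lemma at_right_between c b : c < b -> at_right c (fun y => c < y < b).
Proof.
  intros H. apply locally_of_Rabs with (b - c); [lra|].
  intros t Ht Htc. apply Rabs_def2 in Ht. lra.
Qed.

Section Forward.
Variables (u F : R -> R -> R).
Hypotheses (Hper : periodic_b u) (HF : strip_ext F u) (SF : smooth2 F)
  (SA : smooth2 (Aplus u)).

Lemma odd_flat_theta_of_smooth_Aplus x :
  odd_flat (theta_coords F x) (PI / 2) /\ odd_flat (theta_coords F x) (- (PI / 2)).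
Proof.
  pose proof PI_RGT_0.
  assert (Sf : smooth_on (fun _ => True) (Aplus_theta u x))
    by now apply smooth_on_section, smooth2_Aplus_theta.
  assert (Sg : smooth_on (fun _ => True) (theta_coords F x))
    by now apply smooth_on_section, smooth2_theta_coords.
  assert (Emid : forall y, -(PI / 2) < y < PI / 2 -> Aplus_theta u x y = theta_coords F x y).
  { intros y Hy. rewrite (Aplus_theta_shift u F 0 x y Hper HF); simpl; [|lra].
    replace (y - 2 * PI * 0) with y by ring. destruct (Rle_dec y (PI / 2)); [easy|lra]. }
  split.
  - apply (odd_flat_of_reflection (at_left (PI / 2)) (at_right (PI / 2)) (PI / 2)
      (fun y => -(PI / 2) < y < PI / 2) (fun y => PI / 2 < y < 3 * (PI / 2))
      (Aplus_theta u x)); [apply filter_le_within|apply filter_le_within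
      |apply open_between|apply open_between|apply at_left_between; lra
      |apply at_right_between; lra|exact Sf|exact Sg|exact Emid|].
    intros y Hy. rewrite (Aplus_theta_shift u F 0 x y Hper HF); simpl; [|lra].
    replace (y - 2 * PI * 0) with y by ring.
    destruct (Rle_dec y (PI / 2)); [lra|]. f_equal. field.
  - apply (odd_flat_of_reflection (at_right (- (PI / 2))) (at_left (- (PI / 2))) (- (PI / 2))
      (fun y => -(PI / 2) < y < PI / 2) (fun y => -3 * (PI / 2) < y < - (PI / 2))
      (Aplus_theta u x)); [apply filter_le_within|apply filter_le_within
      |apply open_between|apply open_between|apply at_right_between; lra
      |apply at_left_between; lra|exact Sf|exact Sg|exact Emid|].
    intros y Hy. rewrite (Aplus_theta_shift u F (-1) x y Hper HF); simpl; [|lra].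
    destruct (Rle_dec _ (PI / 2)); [lra|]. f_equal. field.
Qed.
End Forward.

Section Backward.
Variables (u F : R -> R -> R).
Hypotheses (Hper : periodic_b u) (HF : strip_ext F u) (SF : smooth2 F)
  (Hflat : forall x, odd_flat (theta_coords F x) (PI / 2) /\
                     odd_flat (theta_coords F x) (- (PI / 2))).

Let G := theta_coords F.
Let W_top := glue (PI / 2) G (comp_snd (2 * (PI / 2)) (-1) G).
Let W_bot := glue (- (PI / 2)) (comp_snd (2 * - (PI / 2)) (-1) G) G.

Lemma smooth2_W_top_W_bot : smooth2 W_top /\ smooth2 W_bot.
Proof.
  assert (SG : smooth2 G) by now apply smooth2_theta_coords.
  split; [apply (smooth2_glue_reflection G (PI / 2))
         |apply (smooth2_glue_reflection G (- (PI / 2)))];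
    auto; intro x; apply Hflat.
Qed.

Lemma Aplus_theta_W_top (z : Z) x y : -(PI / 2) < y - 2 * PI * IZR z < 3 * (PI / 2) ->
  Aplus_theta u x y = W_top x (y - 2 * PI * IZR z).
Proof.
  intros Hy. rewrite (Aplus_theta_shift u F z x y Hper HF) by lra. cbv zeta.
  unfold W_top, glue, comp_snd. destruct (Rle_dec _ (PI / 2)); [reflexivity|].
  unfold G. f_equal. field.
Qed.

Lemma Aplus_theta_W_bot (z : Z) x y : -3 * (PI / 2) < y - 2 * PI * IZR z < PI / 2 ->
  Aplus_theta u x y = W_bot x (y - 2 * PI * IZR z).
Proof.
  intros Hy. unfold W_bot, glue, comp_snd.
  destruct (Rle_dec (y - 2 * PI * IZR z) (- (PI / 2))) as [Hle|Hgt].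
  - destruct (Req_dec (y - 2 * PI * IZR z) (- (PI / 2))) as [Heq|Hne].
    + rewrite (Aplus_theta_shift u F z x y Hper HF) by lra. cbv zeta.
      destruct (Rle_dec _ (PI / 2)); [|lra]. unfold G. f_equal. lra.
    + rewrite (Aplus_theta_shift u F (z - 1) x y Hper HF) by (rewrite minus_IZR; simpl; lra).
      cbv zeta. rewrite minus_IZR. simpl.
      destruct (Rle_dec _ (PI / 2)); [lra|]. unfold G. f_equal. lra.
  - rewrite (Aplus_theta_shift u F z x y Hper HF) by lra. cbv zeta.
    destruct (Rle_dec _ (PI / 2)); [reflexivity|lra].
Qed.

(* Shift [y0] by a multiple of [2 PI] into [[0, 2 PI)]; a window of radius [PI / 2]
   around it then lies in the domain of [W_top] or, after one more shift, of [W_bot]. *)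
Lemma smooth2_Aplus_of_odd_flat : smooth2 (Aplus u).
Proof.
  pose proof PI_RGT_0. destruct smooth2_W_top_W_bot as [Stop Sbot].
  apply (smooth2_Aplus_theta u), smooth2_locally. intros x0 y0.
  destruct (exists_period_shift y0) as [z Hz].
  destruct (Rle_dec (y0 - 2 * PI * IZR z) PI).
  - exists (comp_snd (- (2 * PI * IZR z)) 1 W_top), (PI / 2).
    split; [lra|split; [now apply smooth2_comp_snd|]].
    intros x y [_ Hy]. apply Rabs_def2 in Hy.
    rewrite (Aplus_theta_W_top z) by lra. unfold comp_snd. f_equal. ring.
  - exists (comp_snd (- (2 * PI * IZR (z + 1))) 1 W_bot), (PI / 2).
    split; [lra|split; [now apply smooth2_comp_snd|]].
    intros x y [_ Hy]. apply Rabs_def2 in Hy.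
    rewrite (Aplus_theta_W_bot (z + 1)) by (rewrite plus_IZR; lra).
    unfold comp_snd. f_equal. ring.
Qed.
End Backward.

(** * The compactified fibre [[-oo, +oo]] *)

Lemma atanbar_tanbar a : -(PI / 2) <= a <= PI / 2 -> atanbar (tanbar a) = a.
Proof.
  intros Ha. unfold tanbar.
  destruct (Rle_dec (PI / 2) a); [simpl; lra|].
  destruct (Rle_dec a (- (PI / 2))); [simpl; lra|].
  apply atan_tan. lra.
Qed.

Lemma tanbar_atanbar a : tanbar (atanbar a) = a.
Proof.
  pose proof PI_RGT_0. destruct a as [x| |]; simpl; unfold tanbar.
  - pose proof (atan_bound x).
    destruct (Rle_dec (PI / 2) (atan x)); [lra|].
    destruct (Rle_dec (atan x) (- (PI / 2))); [lra|].
    now rewrite tan_atan.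
  - destruct (Rle_dec (PI / 2) (PI / 2)); [reflexivity|lra].
  - destruct (Rle_dec (PI / 2) (- (PI / 2))); [lra|].
    destruct (Rle_dec (- (PI / 2)) (- (PI / 2))); [reflexivity|lra].
Qed.

Lemma atanbar_opp a : atanbar (Rbar_opp a) = - atanbar a.
Proof. destruct a as [x| |]; simpl; [apply atan_opp|reflexivity|ring]. Qed.

Lemma atanbar_bound a : -(PI / 2) <= atanbar a <= PI / 2.
Proof.
  pose proof PI_RGT_0. destruct a as [x| |]; simpl; [pose proof (atan_bound x)|..]; lra.
Qed.

Lemma tanbar_opp a : -(PI / 2) <= a <= PI / 2 -> tanbar (- a) = Rbar_opp (tanbar a).
Proof.
  intros Ha. pose proof PI_RGT_0. unfold tanbar.
  destruct (Rle_dec (PI / 2) a); destruct (Rle_dec a (- (PI / 2)));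
    destruct (Rle_dec (PI / 2) (- a)); destruct (Rle_dec (- a) (- (PI / 2)));
    simpl; try lra; try reflexivity.
  now rewrite tan_neg.
Qed.

Lemma pullstrip_Psi_hf (h : R -> Rbar -> R) u :
  (forall b a, h b a = u b (atanbar a)) ->
  forall b a, -(PI / 2) <= a <= PI / 2 -> pullstrip h b a = u b a.
Proof. intros Hh b a Ha. unfold pullstrip. now rewrite Hh, atanbar_tanbar. Qed.

Lemma SHA_invariant_of_SEA (h : R -> Rbar -> R) u :
  (forall b a, h b a = u b (atanbar a)) ->
  (forall b a, -(PI / 2) <= a <= PI / 2 -> u (fst (SEA b a)) (snd (SEA b a)) = u b a) ->
  forall b a, h b a = h (fst (SHA b a)) (snd (SHA b a)).
Proof.
  intros Hh Hu b a. rewrite !Hh. simpl. rewrite atanbar_opp.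
  symmetry. apply (Hu b (atanbar a) (atanbar_bound a)).
Qed.

Lemma SEA_invariant_of_SHA (h : R -> Rbar -> R) :
  (forall b a, h b a = h (fst (SHA b a)) (snd (SHA b a))) ->
  forall b a, -(PI / 2) <= a <= PI / 2 ->
  pullstrip h (fst (SEA b a)) (snd (SEA b a)) = pullstrip h b a.
Proof.
  intros Hh b a Ha. unfold SEA, pullstrip. simpl.
  rewrite (Hh b (tanbar a)). simpl. rewrite atanbar_tanbar, tanbar_opp by exact Ha.
  reflexivity.
Qed.

Theorem lemma2p1 (h : R -> Rbar -> R) (hper : periodic_b h) :
  C_alpha_plus_GH h <->
  (C_GH h /\
   (forall (b : R) (a : Rbar), h b a = h (fst (SHA b a)) (snd (SHA b a))) /\
   odd_taylor_vanish h).
Proof.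
  split.
  - intros [u [Hper [[[[F [SF HF]] SA] Hsym] Hh]]]. simpl in Hh.
    pose proof (pullstrip_Psi_hf h u Hh) as Hpull.
    split; [|split].
    + exists F. split; [exact SF|]. intros b a Ha. now rewrite HF, Hpull.
    + exact (SHA_invariant_of_SEA h u Hh Hsym).
    + intros F' SF' HF' k th Hk. revert k Hk. apply (odd_flat_theta_iff F' th SF').
      apply (odd_flat_theta_of_smooth_Aplus u); [exact Hper| |exact SF'|exact SA].
      intros b a Ha. now rewrite HF', Hpull.
  - intros [[F [SF HF]] [Hsym Hodd]]. exists (pullstrip h).
    split; [intros b a; apply hper|]. split; [split; [split|]|].
    + now exists F.
    + apply (smooth2_Aplus_of_odd_flat _ F); [intros b a; apply hper|exact HF|exact SF|].
      intro x. apply (odd_flat_theta_iff F x SF). intros k Hk. exact (Hodd F SF HF k x Hk).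
    + now apply SEA_invariant_of_SHA.
    + intros b a. simpl. unfold pullstrip. now rewrite tanbar_atanbar.
Qed.
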